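(* Let $\Phi:\mathbb{R}^n\to\mathbb{R}$ be convex, of class $C^2$, bounded below, with $\operatorname{Argmin}\Phi\neq\emptyset$, and let $\alpha,\beta>0$. Consider $\dot x=v$, $\dot v=-\alpha v-\nabla\Phi(x)-\beta\nabla^2\Phi(x)v$. Let $W(x,v):=(\alpha\beta+1)\Phi(x)+\tfrac12\|v+\beta\nabla\Phi(x)\|^2$, fix $z\in\operatorname{Argmin}\Phi$, and for $\varepsilon>0$ let \[ W_\varepsilon(x,v):=W(x,v)+\varepsilon\Big(\tfrac{\alpha}{2}\|x-z\|^2+\langle v+\beta\nabla\Phi(x),\,x-z\rangle\Big). \] If $0<\varepsilon<\min\{\tfrac23\alpha,\ \tfrac2\beta\}$, then along every solution \[ \tfrac{d}{dt}W_\varepsilon(x(t),v(t))\le -c_\varepsilon\big(\|v(t)\|^2+\|\nabla\Phi(x(t))\|^2\big),\qquad c_\varepsilon:=\min\Big\{\alpha-\tfrac32\varepsilon,\ \beta-\tfrac{\beta^2}{2}\varepsilon\Big\}>0. \] *)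

From HB Require Import structures.
From mathcomp Require Import all_boot all_order all_algebra.
From mathcomp Require Import all_classical all_reals all_analysis.
Set Implicit Arguments. Unset Strict Implicit. Unset Printing Implicit Defensive.
Import Order.TTheory GRing.Theory Num.Theory.
Import numFieldNormedType.Exports.
Local Open Scope ring_scope.

Section Defs.
Variables (R : realType) (n : nat).
Local Notation V := 'rV[R]_n.

(* Euclidean inner product and squared Euclidean norm on R^n
   (the library norm on 'rV is the sup norm, so we define these explicitly). *)
Definition dotp (u w : V) : R := \sum_(i < n) u 0 i * w 0 i.
Definition sqnorm (u : V) : R := dotp u u.

Definition ebasis (i : 'I_n) : V := delta_mx 0 i.

Definition grad (Phi : V -> R) (x : V) : V := \row_i ('d Phi x (ebasis i)).

Definition hessv (Phi : V -> R) (x v : V) : V := 'd (grad Phi) x v.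

Definition C2 (Phi : V -> R) : Prop :=
  (forall x, differentiable Phi x) /\
  (forall x, differentiable (grad Phi) x) /\
  (forall i j : 'I_n, continuous (fun x => (hessv Phi x (ebasis j)) 0 i)).

Definition convex_fun (Phi : V -> R) : Prop :=
  forall (x y : V) (t : R), 0 <= t -> t <= 1 ->
    Phi ((1 - t) *: x + t *: y) <= (1 - t) * Phi x + t * Phi y.

Definition bounded_below (Phi : V -> R) : Prop :=
  exists m : R, forall x, m <= Phi x.

Definition is_argmin (Phi : V -> R) (z : V) : Prop := forall x, Phi z <= Phi x.

Definition is_solution (Phi : V -> R) (alpha beta : R) (I : set R)
    (x v : R -> V) : Prop :=
  forall t, I t ->
    derivable x t 1 /\ derive1 x t = v t /\
    derivable v t 1 /\
    derive1 v t = - (alpha *: v t) - grad Phi (x t) - beta *: hessv Phi (x t) (v t).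

Definition W (Phi : V -> R) (alpha beta : R) (x v : V) : R :=
  (alpha * beta + 1) * Phi x + 2^-1 * sqnorm (v + beta *: grad Phi x).

Definition Weps (Phi : V -> R) (alpha beta eps : R) (z : V) (x v : V) : R :=
  W Phi alpha beta x v +
  eps * (alpha / 2 * sqnorm (x - z) + dotp (v + beta *: grad Phi x) (x - z)).

End Defs.

From HB Require Import structures.
From mathcomp Require Import all_boot all_order all_algebra.
From mathcomp Require Import all_classical all_reals all_analysis.
From mathcomp Require Import ring lra.
Import Order.TTheory GRing.Theory Num.Theory.
Import numFieldNormedType.Exports.
Local Open Scope classical_set_scope.
Local Open Scope ring_scope.

(* Write w = v, g = ∇Φ(x) and u = w + β g.  Along a solution u' = -α w - g, so
   d/dt W = (αβ+1)<g,w> + <u, -α w - g> = -α|w|² - β|g|², while the correction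
   term has derivative ε(|w|² + β<g,w> - <g, x - z>).  Convexity and z ∈ Argmin Φ
   give <g, x - z> ≥ 0, and 2β<g,w> ≤ |w|² + β²|g|² absorbs the cross term. *)

Section EuclideanInnerProduct.
Context {R : realType} {n : nat}.
Local Notation V := 'rV[R]_n.

Lemma dotpC (a b : V) : dotp a b = dotp b a.
Proof. by apply: eq_bigr => i _; rewrite mulrC. Qed.

Lemma dotpDl (a b c : V) : dotp (a + b) c = dotp a c + dotp b c.
Proof. by rewrite /dotp -big_split; apply: eq_bigr => i _; rewrite mxE mulrDl. Qed.

Lemma dotpDr (a b c : V) : dotp a (b + c) = dotp a b + dotp a c.
Proof. by rewrite dotpC dotpDl !(dotpC a). Qed.

Lemma dotpZl k (a b : V) : dotp (k *: a) b = k * dotp a b.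
Proof. by rewrite /dotp mulr_sumr; apply: eq_bigr => i _; rewrite mxE mulrA. Qed.

Lemma dotpZr k (a b : V) : dotp a (k *: b) = k * dotp a b.
Proof. by rewrite dotpC dotpZl dotpC. Qed.

Lemma dotpNl (a b : V) : dotp (- a) b = - dotp a b.
Proof. by rewrite -scaleN1r dotpZl mulN1r. Qed.

Lemma dotpNr (a b : V) : dotp a (- b) = - dotp a b.
Proof. by rewrite dotpC dotpNl dotpC. Qed.

Lemma sqnorm_ge0 (a : V) : 0 <= sqnorm a.
Proof. by apply: sumr_ge0 => i _; rewrite -expr2 sqr_ge0. Qed.

Lemma dotp_le_sqnorm (a b : V) : 2 * dotp a b <= sqnorm a + sqnorm b.
Proof.
have := sqnorm_ge0 (a - b).
rewrite /sqnorm !(dotpDl, dotpDr, dotpNl, dotpNr) (dotpC b a); lra.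
Qed.

End EuclideanInnerProduct.

Section Gradient.
Context {R : realType} {n : nat} (Phi : 'rV[R]_n -> R).

Lemma diff_grad x h : 'd Phi x h = dotp (grad Phi x) h.
Proof.
rewrite {1}(row_sum_delta h) linear_sum /dotp; apply: eq_bigr => i _.
by rewrite linearZ /= mxE mulrC.
Qed.

Lemma convex_diff_le {x} y : convex_fun Phi -> differentiable Phi x ->
  'd Phi x (y - x) <= Phi y - Phi x.
Proof.
move=> cvx dPhi; have dd : derivable Phi x (y - x) := diff_derivable dPhi.
rewrite -deriveE // /derive.
set f := fun h : R => h^-1 *: (Phi (h *: (y - x) + x) - Phi x).
have cf : cvg (f @ 0^') := dd.
rewrite (cvg_at_rightE f 0 cf); apply: limr_le.
  apply/cvg_ex; exists (lim (f @ 0^')); apply: cvg_trans cf; apply: cvg_app.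
  move=> A [e e_gt0 Ae]; exists e => // h he h_gt0; apply: Ae => //.
  exact/lt0r_neq0.
near=> h.
have h_gt0 : 0 < h by near: h; exists 1 => /=.
have h_lt1 : h < 1.
  near: h; exists 1 => //= h.
  by rewrite /ball_ /= sub0r normrN => hh _; exact: le_lt_trans (ler_norm h) hh.
rewrite /f /GRing.scale /= ler_pdivrMl //.
have -> : h *: (y - x) + x = (1 - h) *: x + h *: y.
  by rewrite scalerBr scalerBl scale1r addrC addrCA addrC.
have := cvx x y h (ltW h_gt0) (ltW h_lt1); lra.
Unshelve. all: by end_near. Qed.

Lemma argmin_dotp_grad_ge0 x z : convex_fun Phi -> is_argmin Phi z ->
  differentiable Phi x -> 0 <= dotp (grad Phi x) (x - z).
Proof.
move=> cvx zmin dPhi; have := convex_diff_le z cvx dPhi.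
rewrite diff_grad -opprB dotpNr; have := zmin x; lra.
Qed.

End Gradient.

Section DerivativesAlongCurves.
Context {R : realType} {n : nat}.
Local Notation V := 'rV[R]_n.
Implicit Types (y a b : R -> V) (t : R).

Lemma is_derive_diff_comp {W : normedModType R} {F : V -> W} {y t dy} :
  differentiable F (y t) -> is_derive t 1 y dy ->
  is_derive t 1 (F \o y) ('d F (y t) dy).
Proof.
move=> dF hy; have dy_t : differentiable y t by apply/derivable1_diffP; case: hy.
have dFy : differentiable (F \o y) t by exact: differentiable_comp.
apply: DeriveDef; first exact/derivable1_diffP.
rewrite (deriveE (f := F \o y)) // (diff_comp dy_t dF) /= -(deriveE (f := y)) //.
by case: hy => _ ->.
Qed.

Lemma is_derive_coord {y t dy} (i : 'I_n) :
  is_derive t 1 y dy -> is_derive t 1 (fun s => y s 0 i) (dy 0 i).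
Proof.
case=> dy_t dyE; apply: DeriveDef; first by move/derivable_mxP: dy_t; apply.
by rewrite -dyE derive_mx // mxE.
Qed.

Lemma is_derive_dotp {a b t da db} :
  is_derive t 1 a da -> is_derive t 1 b db ->
  is_derive t 1 (fun s => dotp (a s) (b s)) (dotp da (b t) + dotp (a t) db).
Proof.
move=> ha hb; rewrite /dotp -big_split /=.
have := is_derive_sum (fun i : 'I_n =>
  is_deriveM (is_derive_coord i ha) (is_derive_coord i hb)).
rewrite fct_sumE => /is_derive_eq; apply; apply: eq_bigr => i _.
by rewrite addrC; congr (_ + _); exact: mulrC.
Qed.

End DerivativesAlongCurves.

Section Energy.
Context {R : realType} {n : nat} (Phi : 'rV[R]_n -> R).
Variables (alpha beta eps : R) (z : 'rV[R]_n).

Lemma is_derive_Weps {x v : R -> 'rV[R]_n} {t} :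
  differentiable Phi (x t) -> differentiable (grad Phi) (x t) ->
  is_derive t 1 x (v t) ->
  is_derive t 1 v (- (alpha *: v t) - grad Phi (x t) - beta *: hessv Phi (x t) (v t)) ->
  is_derive t 1 (fun s => Weps Phi alpha beta eps z (x s) (v s))
    (- (alpha - eps) * sqnorm (v t) - beta * sqnorm (grad Phi (x t))
     + eps * (beta * dotp (grad Phi (x t)) (v t) - dotp (grad Phi (x t)) (x t - z))).
Proof.
move=> dPhi dgrad hx hv.
have hP := is_derive_diff_comp dPhi hx.
have hu := is_deriveD hv (is_deriveZ beta (is_derive_diff_comp dgrad hx)).
have hE := is_deriveB hx (is_derive_cst z t 1).
have hW := is_deriveD
  (is_deriveD (is_deriveZ (alpha * beta + 1) hP) (is_deriveZ (2^-1) (is_derive_dotp hu hu)))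
  (is_deriveZ eps (is_deriveD (is_deriveZ (alpha / 2) (is_derive_dotp hE hE))
                               (is_derive_dotp hu hE))).
apply: is_derive_eq hW _.
rewrite -/(hessv Phi (x t) (v t)) subrK subr0 diff_grad /GRing.scale /=.
set g := grad Phi (x t); set w := v t.
rewrite /sqnorm !(dotpDl, dotpDr, dotpNl, dotpNr, dotpZl, dotpZr).
rewrite /comp /cst /= -/w -/g (dotpC w g) (dotpC (x t) w) (dotpC z w).
by field.
Qed.

Lemma Weps_rate_le (w g e : 'rV[R]_n) c : 0 < eps -> 0 <= dotp g e ->
  c <= alpha - 3 / 2 * eps -> c <= beta - beta ^+ 2 / 2 * eps ->
  - (alpha - eps) * sqnorm w - beta * sqnorm g + eps * (beta * dotp g w - dotp g e)
    <= - c * (sqnorm w + sqnorm g).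
Proof.
move=> e_gt0 ge_ge0 c_le1 c_le2.
have cross := dotp_le_sqnorm w (beta *: g).
rewrite /sqnorm dotpZl !dotpZr (dotpC w g) -/(sqnorm g) -/(sqnorm w) in cross.
have p_cross : 0 <= eps * (sqnorm w + beta * (beta * sqnorm g) - 2 * (beta * dotp g w)).
  by rewrite mulr_ge0 ?subr_ge0 // ltW.
have p_e : 0 <= eps * dotp g e by rewrite mulr_ge0 // ltW.
have p_w : 0 <= (alpha - 3 / 2 * eps - c) * sqnorm w.
  by rewrite mulr_ge0 ?subr_ge0 ?sqnorm_ge0.
have p_g : 0 <= (beta - beta ^+ 2 / 2 * eps - c) * sqnorm g.
  by rewrite mulr_ge0 ?subr_ge0 ?sqnorm_ge0.
rewrite expr2 in p_g; lra.
Qed.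

End Energy.

Theorem mainTheorem11 (R : realType) (n : nat) (Phi : 'rV[R]_n -> R)
  (alpha beta eps : R) (z : 'rV[R]_n) (I : set R) (x v : R -> 'rV[R]_n) :
  convex_fun Phi -> C2 Phi -> bounded_below Phi ->
  is_argmin Phi z ->
  0 < alpha -> 0 < beta ->
  0 < eps -> eps < Num.min (2 / 3 * alpha) (2 / beta) ->
  open I -> is_solution Phi alpha beta I x v ->
  let c := Num.min (alpha - 3 / 2 * eps) (beta - beta ^+ 2 / 2 * eps) in
  0 < c /\
  forall t, I t ->
    derivable (fun s => Weps Phi alpha beta eps z (x s) (v s)) t 1 /\
    derive1 (fun s => Weps Phi alpha beta eps z (x s) (v s)) t
      <= - c * (sqnorm (v t) + sqnorm (grad Phi (x t))).
Proof.
move=> cvx [dPhi [dgrad _]] _ zmin a_gt0 b_gt0 e_gt0.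
rewrite lt_min => /andP[e_lt1 e_lt2] _ sol c.
have c_le1 : c <= alpha - 3 / 2 * eps by rewrite ge_min lexx.
have c_le2 : c <= beta - beta ^+ 2 / 2 * eps by rewrite ge_min lexx orbT.
split.
  have eb_lt2 : eps * beta < 2 by rewrite -ltr_pdivlMr.
  by rewrite lt_min; apply/andP; split; [lra | rewrite expr2; nra].
move=> t It; have [dx_t [x'E [dv_t v'E]]] := sol t It.
have hx : is_derive t 1 x (v t) by apply: DeriveDef; rewrite -?derive1E.
have hv : is_derive t 1 v
    (- (alpha *: v t) - grad Phi (x t) - beta *: hessv Phi (x t) (v t)).
  by apply: DeriveDef; rewrite -?derive1E.
have [dW dWE] := is_derive_Weps Phi alpha beta eps z (dPhi _) (dgrad _) hx hv.
split; first exact: dW.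
rewrite derive1E dWE; apply: Weps_rate_le => //.
exact: argmin_dotp_grad_ge0.
Qed.
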